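(* Let $\{X_n;n\ge1\}$ be a sequence of independent random variables in a sub-linear expectation space $(\Omega,\mathscr H,\hat{\mathbb E})$ with $\hat{\mathbb E}[X_k^2]<\infty$ and $\hat{\mathbb E}[X_k]\le0$ for all $k$. Let $S_n=\sum_{k=1}^nX_k$, $V_n^2=\sum_{k=1}^nX_k^2$, $\overline B_n^2=\sum_{k=1}^n\hat{\mathbb E}[X_k^2]$, $\underline B_n^2=\sum_{k=1}^n\hat{\mathcal E}[X_k^2]>0$, $q_n=\overline B_n^2/\underline B_n^2$, $\Delta_{n,x}=\overline B_n^{-2}\sum_{k=1}^n\hat{\mathbb E}[X_k^2(1\wedge|xX_k/\overline B_n|)]$, and $\delta=\frac14\underline B_n^2/\overline B_n^2$. Then there is an absolute constant $C$ such that for all $x\ge2$, $$\mathbb V\big(S_n\ge xV_n,\ \delta\overline B_n^2\le V_n^2\le9\overline B_n^2\big)\le\exp\Big\{-\frac{x^2}{2}+Cq_n^{3/2}\big(\log x+x^2\Delta_{n,x}\big)\Big\}.$$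
   Context: Sub-linear expectation space: $\mathscr H$ is a linear space of real functions on a measurable space $(\Omega,\mathcal F)$, closed under $\varphi(X_1,\dots,X_n)$ for $\varphi$ bounded continuous or locally Lipschitz with polynomial growth; $\hat{\mathbb E}:\mathscr H\to[-\infty,\infty]$ is monotone, constant preserving, sub-additive and positively homogeneous. $\hat{\mathcal E}[X]=-\hat{\mathbb E}[-X]$; $\mathbb V(A)=\inf\{\hat{\mathbb E}[\xi]:I_A\le\xi,\xi\in\mathscr H\}$. Independence: $\mathbf Y$ is independent of $\mathbf X$ if $\hat{\mathbb E}[\varphi(\mathbf X,\mathbf Y)]=\hat{\mathbb E}[\hat{\mathbb E}[\varphi(\mathbf x,\mathbf Y)]|_{\mathbf x=\mathbf X}]$ for all locally Lipschitz $\varphi$ of polynomial growth (whenever the relevant expectations are finite); $\{X_n\}$ is independent if $X_{i+1}$ is independent of $(X_1,\dots,X_i)$ for each $i$. $a\wedge b=\min(a,b)$. *)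

From Stdlib Require Import Reals Lra Arith.
From Coquelicot Require Import Coquelicot.
Open Scope R_scope.

Fixpoint rsum (n : nat) (f : nat -> R) : R :=
  match n with O => 0 | S m => rsum m f + f m end.

Definition nrm (n : nat) (x : nat -> R) : R := rsum n (fun i => Rabs (x i)).

Definition Clip (n : nat) (phi : (nat -> R) -> R) : Prop :=
  exists (C : R) (m : nat), forall x y : nat -> R,
    Rabs (phi x - phi y) <=
      C * (1 + nrm n x ^ m + nrm n y ^ m) * nrm n (fun i => x i - y i).

Definition Cb (n : nat) (phi : (nat -> R) -> R) : Prop :=
  (exists M : R, forall x, Rabs (phi x) <= M) /\
  (forall x (eps : R), 0 < eps -> exists d : R, 0 < d /\
     forall y, nrm n (fun i => x i - y i) < d -> Rabs (phi x - phi y) < eps).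

Record SLE (Omega : Type) := mkSLE {
  H : (Omega -> R) -> Prop;
  E : (Omega -> R) -> Rbar;
  H_cst : forall c : R, H (fun _ => c);
  H_add : forall X Y, H X -> H Y -> H (fun w => X w + Y w);
  H_scal : forall (a : R) X, H X -> H (fun w => a * X w);
  H_comp : forall (n : nat) (Xs : nat -> Omega -> R) (phi : (nat -> R) -> R),
      (forall i, (i < n)%nat -> H (Xs i)) -> (Cb n phi \/ Clip n phi) ->
      H (fun w => phi (fun i => Xs i w));
  E_mono : forall X Y, H X -> H Y -> (forall w, X w <= Y w) -> Rbar_le (E X) (E Y);
  E_cst : forall c : R, E (fun _ => c) = Finite c;
  E_subadd : forall X Y, H X -> H Y -> ex_Rbar_plus (E X) (E Y) ->
      Rbar_le (E (fun w => X w + Y w)) (Rbar_plus (E X) (E Y));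
  E_poshom : forall (l : R) X, H X -> 0 < l ->
      E (fun w => l * X w) = Rbar_mult (Finite l) (E X)
}.
Arguments H {Omega}.
Arguments E {Omega}.

Definition Elow {Omega} (S : SLE Omega) (X : Omega -> R) : Rbar :=
  Rbar_opp (E S (fun w => - X w)).

Definition Vcap {Omega} (S : SLE Omega) (A : Omega -> Prop) : Rbar :=
  Rbar_glb (fun r => exists xi, H S xi /\
     (forall w, A w -> 1 <= xi w) /\ (forall w, 0 <= xi w) /\ r = E S xi).

(* The sequence X 0, X 1, ... (X k stands for the paper's X_{k+1}) is
   independent: for each i, X i is independent of (X 0, ..., X (i-1)).
   For phi locally Lipschitz in the first i+1 coordinates,
     E[phi(X_0..X_{i-1}, X_i)] = E[ psi(X_0..X_{i-1}) ],
     psi(x) = E[phi(x, X_i)],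
   whenever the relevant expectations are finite (and psi(X) is in H). *)
Definition indep_seq {Omega} (Sp : SLE Omega) (X : nat -> Omega -> R) : Prop :=
  forall (i : nat) (phi : (nat -> R) -> R), Clip (S i) phi ->
    let inner := fun x : nat -> R =>
      E Sp (fun w => phi (fun j => if Nat.ltb j i then x j else X i w)) in
    (forall x, is_finite (inner x)) ->
    H Sp (fun w => real (inner (fun j => X j w))) ->
    is_finite (E Sp (fun w => real (inner (fun j => X j w)))) ->
    E Sp (fun w => phi (fun j => X j w)) =
    E Sp (fun w => real (inner (fun j => X j w))).

(* For a tilt [l > 0], [exp (l S_n - l^2 V_n^2 / 2)] is the product of the bounded
   Lipschitz functions [tilt l X_k] of independent variables, so its upper expectation
   factorizes; since [E[X_k] <= 0], each factor is at most
   [1 + 2 l^2 (1 + l B / x) E[X_k^2 (1 /\ |x X_k / B|)]], where [B = \overline B_n].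
   On the event, [V_n] lies in [[\underline B_n / 2, 3 B]].  Cover this window by the
   geometric grid [u_j = (\underline B_n / 2) (1 + 1/x)^j] of [O (x q_n^(1/2))] points:
   when [u_j <= V_n <= u_j (1 + 1/x)], the tilt [l = x / u_j] gives
   [1 <= exp (1/2 - x^2/2 + l S_n - l^2 V_n^2 / 2)].  The indicator of the event is thus
   dominated by a sum of tilted products and sub-additivity bounds its capacity; the
   number of grid points produces the [log x] term. *)

From Stdlib Require Import Reals Lra Lia FunctionalExtensionality ZArith.
From Coquelicot Require Import Coquelicot.
Open Scope R_scope.

Lemma exp_le_mono a b : a <= b -> exp a <= exp b.
Proof.
  intros Hab; destruct (Rle_lt_or_eq_dec a b Hab) as [Hlt | ->]; [left; now apply exp_increasing | lra].
Qed.

Lemma le_of_derive_nonneg (f df : R -> R) (a b : R) :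
  (forall x, is_derive f x (df x)) -> (forall x, a <= x <= b -> 0 <= df x) ->
  a <= b -> f a <= f b.
Proof.
  intros Hd Hp Hab.
  destruct (MVT_gen f a b df) as [c [Hc Heq]].
  - intros x _; apply Hd.
  - intros x _; apply derivable_continuous_pt; exists (df x); apply is_derive_Reals, Hd.
  - rewrite Rmin_left, Rmax_right in Hc by lra.
    assert (0 <= df c * (b - a)) by (apply Rmult_le_pos; [apply Hp |]; lra).
    lra.
Qed.

Lemma exp_neg_le_quadratic s : 0 <= s -> exp (- s) <= 1 - s + s ^ 2 / 2.
Proof.
  intros Hs.
  pose (f s := 1 - s + s ^ 2 / 2 - exp (- s)).
  assert (Hf : f 0 <= f s).
  { apply (le_of_derive_nonneg f (fun s => -1 + s + exp (- s))); auto.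
    - intros x; unfold f; auto_derive; auto; field.
    - intros x _; pose proof (exp_ineq1_le (- x)); lra. }
  unfold f in Hf; rewrite Ropp_0, exp_0 in Hf; lra.
Qed.

Lemma exp_neg_ge_cubic s : 0 <= s -> 1 - s + s ^ 2 / 2 - s ^ 3 / 6 <= exp (- s).
Proof.
  intros Hs.
  pose (f s := exp (- s) - (1 - s + s ^ 2 / 2 - s ^ 3 / 6)).
  assert (Hf : f 0 <= f s).
  { apply (le_of_derive_nonneg f (fun s => - exp (- s) + 1 - s + s ^ 2 / 2)); auto.
    - intros x; unfold f; auto_derive; auto; field.
    - intros x Hx; pose proof (exp_neg_le_quadratic x ltac:(lra)); lra. }
  unfold f in Hf; rewrite Ropp_0, exp_0 in Hf; lra.
Qed.

Lemma exp_le_cubic z : 0 <= z <= 1 / 2 -> exp z <= 1 + z + z ^ 2 / 2 + z ^ 3.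
Proof.
  intros Hz.
  pose proof (exp_neg_ge_cubic z ltac:(lra)) as Hlow.
  pose proof (exp_pos (- z)) as Hpos.
  assert (Hinv : exp z * exp (- z) = 1) by (rewrite <- exp_plus, Rplus_opp_r; apply exp_0).
  assert (Hprod : 1 <= (1 + z + z ^ 2 / 2 + z ^ 3) * (1 - z + z ^ 2 / 2 - z ^ 3 / 6)) by nra.
  assert (HP : 0 < 1 - z + z ^ 2 / 2 - z ^ 3 / 6) by nra.
  assert (exp z * (1 - z + z ^ 2 / 2 - z ^ 3 / 6) <= 1).
  { rewrite <- Hinv at 2; apply Rmult_le_compat_l; [left; apply exp_pos | exact Hlow]. }
  nra.
Qed.

Lemma exp_half_le_2 : exp (1 / 2) <= 2.
Proof.
  pose proof exp_le_3; pose proof (exp_pos (1 / 2)).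
  assert (exp 1 = exp (1 / 2) * exp (1 / 2)) by (rewrite <- exp_plus; f_equal; lra).
  nra.
Qed.

Lemma exp_sub_half_sq_le y : exp (y - y ^ 2 / 2) <= 1 + y + 2 * (y ^ 2 * Rmin 1 (Rabs y)).
Proof.
  destruct (Rle_dec 1 (Rabs y)) as [Hy | Hy].
  - rewrite Rmin_left by lra.
    assert (exp (y - y ^ 2 / 2) <= exp (1 / 2)).
    { apply exp_le_mono; pose proof (pow2_ge_0 (y - 1)); simpl in *; lra. }
    pose proof exp_half_le_2.
    assert (1 <= y * y) by (unfold Rabs in Hy; destruct (Rcase_abs y); nra).
    nra.
  - rewrite Rmin_right by lra.
    assert (Hy1 : -1 < y < 1) by (unfold Rabs in Hy; destruct (Rcase_abs y); lra).
    set (z := y - y ^ 2 / 2).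
    destruct (Rle_dec z 0) as [Hz | Hz].
    + pose proof (exp_neg_le_quadratic (- z) ltac:(lra)) as He.
      rewrite Ropp_involutive in He.
      unfold z in *; unfold Rabs; destruct (Rcase_abs y); nra.
    + apply Rnot_le_lt in Hz.
      assert (Hz1 : 0 <= z <= 1 / 2) by (pose proof (pow2_ge_0 (y - 1)); unfold z in *; simpl in *; lra).
      assert (0 <= y) by (unfold z in *; nra).
      assert (z ^ 3 <= y ^ 3) by (apply pow_incr; unfold z; nra).
      pose proof (exp_le_cubic z Hz1).
      rewrite Rabs_pos_eq by lra.
      unfold z in *; nra.
Qed.

Lemma exp_lip a b c : a <= c -> b <= c -> Rabs (exp a - exp b) <= exp c * Rabs (a - b).
Proof.
  assert (Hone : forall p q, p <= q -> q <= c -> exp q - exp p <= exp c * (q - p)).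
  { intros p q Hpq Hq.
    pose proof (exp_ineq1_le (p - q)); pose proof (exp_pos q); pose proof (exp_le_mono q c Hq).
    assert (exp p = exp q * exp (p - q)) by (rewrite <- exp_plus; f_equal; ring).
    nra. }
  intros Ha Hb; destruct (Rle_dec a b) as [Hab | Hab].
  - pose proof (Hone a b Hab Hb); pose proof (exp_le_mono a b Hab).
    rewrite !Rabs_left1 by lra; lra.
  - pose proof (Hone b a ltac:(lra) Ha); pose proof (exp_le_mono b a ltac:(lra)).
    rewrite !Rabs_pos_eq by lra; lra.
Qed.

Fixpoint rprod (n : nat) (f : nat -> R) : R :=
  match n with O => 1 | S m => rprod m f * f m end.

Lemma rsum_ext n f g : (forall k, (k < n)%nat -> f k = g k) -> rsum n f = rsum n g.
Proof.
  induction n; intros Hfg; simpl; auto.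
  rewrite IHn, (Hfg n) by (intros; try apply Hfg; lia); auto.
Qed.

Lemma rsum_le n f g : (forall k, (k < n)%nat -> f k <= g k) -> rsum n f <= rsum n g.
Proof.
  induction n; intros Hfg; simpl; [lra |].
  pose proof (Hfg n ltac:(lia)); pose proof (IHn ltac:(intros; apply Hfg; lia)); lra.
Qed.

Lemma rsum_nonneg n f : (forall k, 0 <= f k) -> 0 <= rsum n f.
Proof. intros Hf; induction n; simpl; [lra |]; pose proof (Hf n); lra. Qed.

Lemma rsum_ge_term n f j : (forall k, 0 <= f k) -> (j < n)%nat -> f j <= rsum n f.
Proof.
  intros Hf; induction n; intros Hj; [lia |]; simpl.
  destruct (Nat.eq_dec j n) as [-> | Hne].
  - pose proof (rsum_nonneg n f Hf); lra.
  - pose proof (IHn ltac:(lia)); pose proof (Hf n); lra.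
Qed.

Lemma rsum_const n c : rsum n (fun _ => c) = INR n * c.
Proof. induction n; simpl rsum; [simpl; ring |]; rewrite IHn, S_INR; ring. Qed.

Lemma rsum_scal n c f : rsum n (fun k => c * f k) = c * rsum n f.
Proof. induction n; simpl; [ring |]; rewrite IHn; ring. Qed.

Lemma rsum_sub_scal n a c f g :
  rsum n (fun k => a * f k - c * g k) = a * rsum n f - c * rsum n g.
Proof. induction n; simpl; [ring |]; rewrite IHn; ring. Qed.

Lemma rprod_ext n f g : (forall k, (k < n)%nat -> f k = g k) -> rprod n f = rprod n g.
Proof.
  induction n; intros Hfg; simpl; auto.
  rewrite IHn, (Hfg n) by (intros; try apply Hfg; lia); auto.
Qed.

Lemma rprod_pos n f : (forall k, 0 < f k) -> 0 < rprod n f.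
Proof. intros Hf; induction n; simpl; [lra |]; apply Rmult_lt_0_compat; auto. Qed.

Lemma rprod_le n f g : (forall k, 0 <= f k <= g k) -> rprod n f <= rprod n g.
Proof.
  intros Hfg; induction n; simpl; [lra |].
  assert (0 <= rprod n f) by (clear IHn; induction n; simpl; [lra |]; pose proof (Hfg n); nra).
  apply Rmult_le_compat; auto; apply Hfg.
Qed.

Lemma rprod_exp n f : rprod n (fun k => exp (f k)) = exp (rsum n f).
Proof. induction n; simpl; [now rewrite exp_0 |]; now rewrite IHn, exp_plus. Qed.

Lemma rprod_abs_le n f M : 0 <= M -> (forall k, Rabs (f k) <= M) -> Rabs (rprod n f) <= M ^ n.
Proof.
  intros HM Hf; induction n; simpl.
  - rewrite Rabs_R1; lra.
  - rewrite Rabs_mult, Rmult_comm; apply Rmult_le_compat; auto using Rabs_pos.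
Qed.

Lemma nat_ceil_exists y : 0 <= y -> exists N : nat, y <= INR N <= y + 1.
Proof.
  intros Hy; destruct (archimed y) as [Hup1 Hup2].
  assert (Hz : (0 <= up y)%Z) by (apply le_IZR; lra).
  exists (Z.to_nat (up y)); rewrite INR_IZR_INZ, Z2Nat.id by exact Hz; lra.
Qed.

Lemma nrm_nonneg n x : 0 <= nrm n x.
Proof. apply rsum_nonneg; intros; apply Rabs_pos. Qed.

Lemma clip1_of_lip (h : R -> R) L m :
  (forall y z, Rabs (h y - h z) <= L * (1 + Rabs y ^ m + Rabs z ^ m) * Rabs (y - z)) ->
  Clip 1 (fun z => h (z 0%nat)).
Proof. intros Hh; exists L, m; intros x y; unfold nrm; simpl; rewrite !Rplus_0_l; apply Hh. Qed.

Section ClipProduct.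
Variables (h : R -> R) (M L : R).
Hypothesis HM : 1 <= M.
Hypothesis HL : 0 <= L.
Hypothesis Hbound : forall y, Rabs (h y) <= M.
Hypothesis Hlip : forall y z, Rabs (h y - h z) <= L * (1 + Rabs y + Rabs z) * Rabs (y - z).

Lemma rprod_lip n x y :
  Rabs (rprod n (fun k => h (x k)) - rprod n (fun k => h (y k))) <=
  M ^ n * L * (1 + nrm n x + nrm n y) * nrm n (fun i => x i - y i).
Proof.
  induction n as [| n IH].
  - unfold nrm; simpl; rewrite Rminus_diag, Rabs_R0; lra.
  - change (nrm (S n) x) with (nrm n x + Rabs (x n)).
    change (nrm (S n) y) with (nrm n y + Rabs (y n)).
    change (nrm (S n) (fun i => x i - y i)) with (nrm n (fun i => x i - y i) + Rabs (x n - y n)).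
    simpl rprod.
    set (Px := rprod n (fun k => h (x k))) in *; set (Py := rprod n (fun k => h (y k))) in *.
    set (W := 1 + (nrm n x + Rabs (x n)) + (nrm n y + Rabs (y n))).
    pose proof (nrm_nonneg n x); pose proof (nrm_nonneg n y).
    pose proof (nrm_nonneg n (fun i => x i - y i)).
    pose proof (Rabs_pos (x n)); pose proof (Rabs_pos (y n)); pose proof (Rabs_pos (x n - y n)).
    assert (HMn : 1 <= M ^ n) by (apply pow_R1_Rle; lra).
    assert (HcL : 0 <= M ^ n * L) by (apply Rmult_le_pos; lra).
    assert (HPy : Rabs Py <= M ^ n) by (apply rprod_abs_le; [lra | auto]).
    replace (Px * h (x n) - Py * h (y n)) with ((Px - Py) * h (x n) + Py * (h (x n) - h (y n))) by ring.
    eapply Rle_trans; [apply Rabs_triang |]; rewrite !Rabs_mult.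
    assert (T1 : Rabs (Px - Py) * Rabs (h (x n)) <=
                 M ^ S n * L * W * nrm n (fun i => x i - y i)).
    { eapply Rle_trans; [apply Rmult_le_compat; [apply Rabs_pos | apply Rabs_pos | exact IH | apply Hbound] |].
      assert (0 <= M ^ n * L * M * nrm n (fun i => x i - y i)) by (repeat apply Rmult_le_pos; lra).
      simpl pow; unfold W; nra. }
    assert (T2 : Rabs Py * Rabs (h (x n) - h (y n)) <= M ^ S n * L * W * Rabs (x n - y n)).
    { eapply Rle_trans; [apply Rmult_le_compat; [apply Rabs_pos | apply Rabs_pos | exact HPy | apply Hlip] |].
      set (c := M ^ n * L * Rabs (x n - y n)).
      assert (0 <= c) by (repeat apply Rmult_le_pos; lra).
      assert (1 + Rabs (x n) + Rabs (y n) <= W) by (unfold W; lra).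
      assert (0 <= c * W) by (apply Rmult_le_pos; lra).
      assert (c * W <= M * c * W) by nra.
      replace (M ^ n * (L * (1 + Rabs (x n) + Rabs (y n)) * Rabs (x n - y n)))
        with (c * (1 + Rabs (x n) + Rabs (y n))) by (unfold c; ring).
      replace (M ^ S n * L * W * Rabs (x n - y n)) with (M * c * W) by (unfold c; simpl; ring).
      nra. }
    lra.
Qed.

Lemma clip_rprod n : Clip n (fun z => rprod n (fun k => h (z k))).
Proof. exists (M ^ n * L), 1%nat; intros x y; rewrite !pow_1; apply rprod_lip. Qed.

End ClipProduct.

Lemma sq_diff_abs_le y z : Rabs (y ^ 2 - z ^ 2) <= (Rabs y + Rabs z) * Rabs (y - z).
Proof.
  replace (y ^ 2 - z ^ 2) with ((y + z) * (y - z)) by ring; rewrite Rabs_mult.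
  apply Rmult_le_compat_r; [apply Rabs_pos | apply Rabs_triang].
Qed.

Lemma sq_lip y z : Rabs (y ^ 2 - z ^ 2) <= 1 * (1 + Rabs y ^ 1 + Rabs z ^ 1) * Rabs (y - z).
Proof.
  pose proof (sq_diff_abs_le y z); pose proof (Rabs_pos (y - z)).
  rewrite !pow_1, Rmult_1_l, Rmult_plus_distr_r; lra.
Qed.

Lemma Rmin_lip p q p' q' : Rabs (Rmin p q - Rmin p' q') <= Rabs (p - p') + Rabs (q - q').
Proof. unfold Rmin; destruct (Rle_dec p q), (Rle_dec p' q'); unfold Rabs; repeat destruct Rcase_abs; lra. Qed.

Definition trunc_sq (a y : R) : R := y ^ 2 * Rmin 1 (Rabs (a * y)).

Lemma trunc_sq_bounds a y : 0 <= trunc_sq a y <= y ^ 2.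
Proof.
  unfold trunc_sq; pose proof (pow2_ge_0 y); pose proof (Rabs_pos (a * y)).
  assert (0 <= Rmin 1 (Rabs (a * y)) <= 1) by (unfold Rmin; destruct Rle_dec; lra).
  nra.
Qed.

Lemma cube_abs_lip y z :
  Rabs (Rabs y * y ^ 2 - Rabs z * z ^ 2) <= (y ^ 2 + z ^ 2) * 3 / 2 * Rabs (y - z).
Proof.
  set (p := Rabs y); set (q := Rabs z).
  assert (Hp : y ^ 2 = p * p) by (unfold p; rewrite <- Rabs_mult, Rabs_pos_eq; nra).
  assert (Hq : z ^ 2 = q * q) by (unfold q; rewrite <- Rabs_mult, Rabs_pos_eq; nra).
  rewrite Hp, Hq.
  replace (p * (p * p) - q * (q * q)) with ((p - q) * (p * p + p * q + q * q)) by ring.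
  pose proof (Rabs_triang_inv2 y z) as Hpq; fold p q in Hpq.
  pose proof (Rabs_pos y) as Hp0; pose proof (Rabs_pos z) as Hq0; fold p q in Hp0, Hq0.
  rewrite Rabs_mult, (Rabs_pos_eq (p * p + p * q + q * q)) by nra.
  pose proof (pow2_ge_0 (p - q)); pose proof (Rabs_pos (p - q)); simpl in *; nra.
Qed.

Lemma trunc_sq_lip a y z :
  Rabs (trunc_sq a y - trunc_sq a z) <=
  (1 + 2 * Rabs a) * (1 + Rabs y ^ 2 + Rabs z ^ 2) * Rabs (y - z).
Proof.
  assert (Hmin : forall t, trunc_sq a t = Rmin (t ^ 2) (Rabs a * (Rabs t * t ^ 2))).
  { intros t; unfold trunc_sq; rewrite Rmult_comm, Rmult_min_distr_r by apply pow2_ge_0.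
    rewrite Rabs_mult; f_equal; ring. }
  rewrite !Hmin; eapply Rle_trans; [apply Rmin_lip |].
  rewrite <- Rmult_minus_distr_l, Rabs_mult, (Rabs_pos_eq (Rabs a)) by apply Rabs_pos.
  pose proof (sq_diff_abs_le y z); pose proof (cube_abs_lip y z).
  pose proof (Rabs_pos a); pose proof (Rabs_pos y); pose proof (Rabs_pos z); pose proof (Rabs_pos (y - z)).
  assert (Ry : Rabs y ^ 2 = y ^ 2) by (rewrite RPow_abs; apply Rabs_pos_eq, pow2_ge_0).
  assert (Rz : Rabs z ^ 2 = z ^ 2) by (rewrite RPow_abs; apply Rabs_pos_eq, pow2_ge_0).
  assert (Rabs y + Rabs z <= 1 + (y ^ 2 + z ^ 2)).
  { pose proof (pow2_ge_0 (Rabs y - 1)); pose proof (pow2_ge_0 (Rabs z - 1)); simpl in *; nra. }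
  assert (Rabs a * Rabs (Rabs y * y ^ 2 - Rabs z * z ^ 2) <=
          Rabs a * ((y ^ 2 + z ^ 2) * 3 / 2 * Rabs (y - z))) by (apply Rmult_le_compat_l; auto).
  assert ((Rabs y + Rabs z) * Rabs (y - z) <= (1 + y ^ 2 + z ^ 2) * Rabs (y - z))
    by (apply Rmult_le_compat_r; lra).
  assert (0 <= Rabs a * Rabs (y - z)) by (apply Rmult_le_pos; lra).
  pose proof (pow2_ge_0 y); pose proof (pow2_ge_0 z).
  rewrite Ry, Rz; nra.
Qed.

Definition tilt (l y : R) : R := exp (l * y - l ^ 2 / 2 * y ^ 2).

Lemma tilt_pos l y : 0 < tilt l y.
Proof. apply exp_pos. Qed.

Lemma tilt_exponent_le l y : l * y - l ^ 2 / 2 * y ^ 2 <= 1 / 2.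
Proof. pose proof (pow2_ge_0 (l * y - 1)); simpl in *; lra. Qed.

Lemma tilt_abs_le l y : Rabs (tilt l y) <= exp (1 / 2).
Proof. rewrite Rabs_pos_eq by (left; apply tilt_pos); apply exp_le_mono, tilt_exponent_le. Qed.

Lemma tilt_lip l y z :
  Rabs (tilt l y - tilt l z) <= exp (1 / 2) * (Rabs l + l ^ 2) * (1 + Rabs y + Rabs z) * Rabs (y - z).
Proof.
  unfold tilt; eapply Rle_trans; [apply exp_lip; apply tilt_exponent_le |].
  replace (l * y - l ^ 2 / 2 * y ^ 2 - (l * z - l ^ 2 / 2 * z ^ 2))
    with ((y - z) * (l - l ^ 2 * ((y + z) / 2))) by field.
  rewrite Rabs_mult, !Rmult_assoc; apply Rmult_le_compat_l; [left; apply exp_pos |].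
  rewrite Rmult_comm, <- !Rmult_assoc; apply Rmult_le_compat_r; [apply Rabs_pos |].
  eapply Rle_trans; [apply Rabs_triang |].
  rewrite Rabs_Ropp, Rabs_mult, (Rabs_pos_eq (l ^ 2)) by apply pow2_ge_0.
  assert (Rabs ((y + z) / 2) <= Rabs y + Rabs z).
  { unfold Rdiv; rewrite Rabs_mult, (Rabs_pos_eq (/ 2)) by lra.
    pose proof (Rabs_triang y z); pose proof (Rabs_pos (y + z)); lra. }
  pose proof (Rabs_pos l); pose proof (pow2_ge_0 l); pose proof (Rabs_pos y); pose proof (Rabs_pos z).
  nra.
Qed.

Lemma Rmin_1_scal_le s t : 0 <= s -> 0 <= t -> Rmin 1 (s * t) <= (1 + s) * Rmin 1 t.
Proof. intros Hs Ht; unfold Rmin; destruct (Rle_dec 1 (s * t)), (Rle_dec 1 t); nra. Qed.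

Lemma tilt_le_trunc_sq l a y : 0 < l -> 0 < a ->
  tilt l y <= 1 + l * y + 2 * l ^ 2 * (1 + l / a) * trunc_sq a y.
Proof.
  intros Hl Ha; unfold tilt, trunc_sq.
  replace (l * y - l ^ 2 / 2 * y ^ 2) with (l * y - (l * y) ^ 2 / 2) by field.
  eapply Rle_trans; [apply exp_sub_half_sq_le |].
  replace (Rabs (l * y)) with (l / a * Rabs (a * y))
    by (rewrite !Rabs_mult, (Rabs_pos_eq l), (Rabs_pos_eq a) by lra; field; lra).
  assert (Hla : 0 <= l / a) by (apply Rlt_le, Rdiv_lt_0_compat; lra).
  pose proof (Rmin_1_scal_le (l / a) (Rabs (a * y)) Hla (Rabs_pos _)).
  assert (0 <= (l * y) ^ 2) by apply pow2_ge_0.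
  assert ((l * y) ^ 2 * Rmin 1 (l / a * Rabs (a * y)) <=
          (l * y) ^ 2 * ((1 + l / a) * Rmin 1 (Rabs (a * y)))) by (apply Rmult_le_compat_l; auto).
  rewrite Rpow_mult_distr in *; lra.
Qed.

Lemma geometric_grid_locate u0 r V N : 0 < u0 -> 1 <= r -> u0 <= V <= u0 * r ^ N ->
  exists j, (j <= N)%nat /\ u0 * r ^ j <= V <= u0 * r ^ S j.
Proof.
  intros Hu Hr; induction N as [| N IH]; intros [Hlow Hhigh].
  - exists 0%nat; split; [lia |]; simpl in *; nra.
  - destruct (Rle_dec V (u0 * r ^ N)) as [HN | HN].
    + destruct (IH (conj Hlow HN)) as [j [Hj Hjr]]; exists j; split; [lia | auto].
    + exists N; split; [lia | lra].
Qed.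

(* On [u <= V <= u (1 + 1/x)] the tilt [l = x/u] is within [1] of the optimal
   tilt [x/V], which costs only the constant [exp (1/2)]. *)
Lemma tilt_exponent_near_optimal x u V Sv : 0 < x -> 0 < u -> u <= V <= u * (1 + / x) -> Sv >= x * V ->
  0 <= 1 / 2 - x ^ 2 / 2 + (x / u * Sv - (x / u) ^ 2 / 2 * V ^ 2).
Proof.
  intros Hx Hu [Hlow Hhigh] HS.
  set (l := x / u).
  assert (Hl : 0 < l) by (apply Rdiv_lt_0_compat; lra).
  assert (Hlu : l * u = x) by (unfold l; field; lra).
  assert (HlV : x <= l * V <= x + 1).
  { split; [rewrite <- Hlu; apply Rmult_le_compat_l; lra |].
    replace (x + 1) with (l * (u * (1 + / x))) by (rewrite <- Rmult_assoc, Hlu; field; lra).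
    apply Rmult_le_compat_l; lra. }
  assert (l * Sv >= l * (x * V)) by (apply Rle_ge, Rmult_le_compat_l; lra).
  replace (1 / 2 - x ^ 2 / 2 + (l * Sv - l ^ 2 / 2 * V ^ 2))
    with ((1 - (l * V - x) ^ 2) / 2 + l * (Sv - x * V)) by field.
  nra.
Qed.

Lemma tilt_grid_cover x u0 V Sv N : 2 <= x -> 0 < u0 -> u0 <= V <= u0 * (1 + INR N / x) ->
  Sv >= x * V ->
  exists j, (j < S N)%nat /\
    1 <= exp (1 / 2 - x ^ 2 / 2) *
         exp (x / (u0 * (1 + / x) ^ j) * Sv - (x / (u0 * (1 + / x) ^ j)) ^ 2 / 2 * V ^ 2).
Proof.
  intros Hx Hu [Hlow Hhigh] HS.
  assert (Hr : 1 <= 1 + / x) by (pose proof (Rinv_0_lt_compat x ltac:(lra)); lra).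
  assert (Hgrid : V <= u0 * (1 + / x) ^ N).
  { pose proof (poly N (/ x) (Rinv_0_lt_compat x ltac:(lra))).
    unfold Rdiv in Hhigh; nra. }
  destruct (geometric_grid_locate u0 (1 + / x) V N Hu Hr (conj Hlow Hgrid)) as [j [Hj [Hj1 Hj2]]].
  exists j; split; [lia |].
  assert (Huj : 0 < u0 * (1 + / x) ^ j) by (pose proof (pow_R1_Rle _ j Hr); nra).
  pose proof (tilt_exponent_near_optimal x _ V Sv ltac:(lra) Huj ltac:(simpl in Hj2; split; lra) HS).
  rewrite <- exp_plus; eapply Rle_trans; [| apply exp_ineq1_le]; lra.
Qed.

Lemma tilt_coeff_le x u s b : 0 < x -> 0 < s <= b -> s / 2 <= u ->
  2 * (x / u) ^ 2 * (1 + x / u / (x / b)) * b ^ 2 <= 24 * (b / s) ^ 3 * x ^ 2.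
Proof.
  intros Hx [Hs Hsb] Hu.
  set (t := b / s).
  assert (Ht : 1 <= t) by (unfold t; apply (Rmult_le_reg_r s); [lra |]; field_simplify; lra).
  assert (Hb : b = t * s) by (unfold t; field; lra).
  assert (Hinv : / u <= 2 / s).
  { apply (Rmult_le_reg_r u); [lra |]; rewrite Rinv_l by lra.
    apply (Rmult_le_reg_r s); [lra |]; field_simplify; lra. }
  assert (Hxu : (x / u) ^ 2 <= (2 * x / s) ^ 2).
  { apply pow_incr; split; [left; apply Rdiv_lt_0_compat; lra |].
    unfold Rdiv; replace (2 * x * / s) with (x * (2 / s)) by (field; lra).
    apply Rmult_le_compat_l; lra. }
  assert (Hbu : x / u / (x / b) <= 2 * t).
  { replace (x / u / (x / b)) with (b * / u) by (field; lra).
    replace (2 * t) with (b * (2 / s)) by (unfold t; field; lra).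
    apply Rmult_le_compat_l; lra. }
  assert (0 <= x / u / (x / b)) by (apply Rle_trans with 0; [lra | left; repeat apply Rdiv_lt_0_compat; lra]).
  assert (2 * (x / u) ^ 2 * (1 + x / u / (x / b)) * b ^ 2 <= 2 * (2 * x / s) ^ 2 * (1 + 2 * t) * b ^ 2).
  { pose proof (pow2_ge_0 b); pose proof (pow2_ge_0 (x / u)); apply Rmult_le_compat_r; [lra |]; nra. }
  assert (2 * (2 * x / s) ^ 2 * (1 + 2 * t) * b ^ 2 = 8 * x ^ 2 * t ^ 2 * (1 + 2 * t)) by (rewrite Hb; field; lra).
  pose proof (pow2_ge_0 x); simpl in *; nra.
Qed.

Lemma ln_le_sub_1 a : 0 < a -> ln a <= a - 1.
Proof. intros Ha; pose proof (exp_ineq1_le (ln a)); rewrite exp_ln in *; lra. Qed.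

(* Collects the [N + 1] grid points into the [log x] term: [N + 1 <= 8 x t]. *)
Lemma grid_sum_le x t N D : 2 <= x -> 1 <= t -> 0 <= D -> INR N <= 6 * x * t + 1 ->
  INR (S N) * (exp (1 / 2 - x ^ 2 / 2) * exp (24 * t ^ 3 * x ^ 2 * D)) <=
  exp (- x ^ 2 / 2 + 100 * t ^ 3 * (ln x + x ^ 2 * D)).
Proof.
  intros Hx Ht HD HN.
  rewrite S_INR.
  assert (HN8 : INR N + 1 <= 8 * x * t) by nra.
  assert (Hlx : / 2 <= ln x) by (pose proof ln_lt_2; pose proof (ln_le 2 x ltac:(lra) Hx); lra).
  assert (Hln : ln (INR N + 1) <= ln x + 8 * t - 1).
  { pose proof (pos_INR N).
    eapply Rle_trans; [apply ln_le; [lra | exact HN8] |].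
    replace (8 * x * t) with (x * (8 * t)) by ring.
    rewrite ln_mult by lra; pose proof (ln_le_sub_1 (8 * t) ltac:(lra)); lra. }
  rewrite <- (exp_ln (INR N + 1)) by (pose proof (pos_INR N); lra).
  rewrite <- !exp_plus; apply exp_le_mono.
  assert (Ht3 : t <= t ^ 3) by (simpl; nra).
  assert (0 <= t ^ 3 * (x ^ 2 * D)) by (pose proof (pow2_ge_0 x); apply Rmult_le_pos; nra).
  assert (t * ln x <= t ^ 3 * ln x) by nra.
  nra.
Qed.

Section SublinearExpectation.
Context {Omega : Type} (Sp : SLE Omega).

Lemma H_ext X Y : (forall w, X w = Y w) -> H Sp X -> H Sp Y.
Proof. intros e; replace Y with X; auto; now apply functional_extensionality. Qed.

Lemma E_ext X Y : (forall w, X w = Y w) -> E Sp X = E Sp Y.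
Proof. intros e; replace Y with X; auto; now apply functional_extensionality. Qed.

Lemma E_ge_cst X c : H Sp X -> (forall w, c <= X w) -> Rbar_le (Finite c) (E Sp X).
Proof. intros HX Hc; rewrite <- (E_cst _ Sp c); apply E_mono; auto; apply H_cst. Qed.

Lemma E_le_cst X c : H Sp X -> (forall w, X w <= c) -> Rbar_le (E Sp X) (Finite c).
Proof. intros HX Hc; rewrite <- (E_cst _ Sp c); apply E_mono; auto; apply H_cst. Qed.

Lemma E_finite_of_bounds X a b :
  H Sp X -> (forall w, a <= X w <= b) -> E Sp X = Finite (real (E Sp X)).
Proof.
  intros HX Hab.
  pose proof (E_ge_cst X a HX (fun w => proj1 (Hab w))).
  pose proof (E_le_cst X b HX (fun w => proj2 (Hab w))).
  destruct (E Sp X); simpl in *; tauto.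
Qed.

Lemma real_E_nonneg X : H Sp X -> (forall w, 0 <= X w) -> 0 <= real (E Sp X).
Proof. intros HX Hpos; pose proof (E_ge_cst X 0 HX Hpos); destruct (E Sp X); simpl in *; lra. Qed.

Lemma E_scal_finite (l : R) X r :
  H Sp X -> 0 < l -> E Sp X = Finite r -> E Sp (fun w => l * X w) = Finite (l * r).
Proof. intros HX Hl Hr; rewrite E_poshom, Hr; auto. Qed.

Lemma E_scal_le (l : R) X r :
  H Sp X -> 0 < l -> Rbar_le (E Sp X) (Finite r) -> Rbar_le (E Sp (fun w => l * X w)) (Finite (l * r)).
Proof.
  intros HX Hl Hr; rewrite E_poshom by auto.
  destruct (E Sp X); simpl in *; try tauto.
  - apply Rmult_le_compat_l; lra.
  - destruct (Rle_dec 0 l); [| lra]; destruct (Rle_lt_or_eq_dec 0 l r0); simpl; auto; lra.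
Qed.

Lemma H_comp1 (h : R -> R) L m Y :
  (forall y z, Rabs (h y - h z) <= L * (1 + Rabs y ^ m + Rabs z ^ m) * Rabs (y - z)) ->
  H Sp Y -> H Sp (fun w => h (Y w)).
Proof.
  intros Hh HY.
  exact (H_comp _ Sp 1 (fun _ => Y) (fun z => h (z 0%nat)) (fun _ _ => HY) (or_intror (clip1_of_lip h L m Hh))).
Qed.

Lemma H_sq Y : H Sp Y -> H Sp (fun w => Y w ^ 2).
Proof. apply (H_comp1 (fun y => y ^ 2) 1 1), sq_lip. Qed.

Lemma H_rsum m (F : nat -> Omega -> R) :
  (forall j, H Sp (F j)) -> H Sp (fun w => rsum m (fun j => F j w)).
Proof.
  intros HF; induction m; simpl; [apply H_cst |].
  apply (H_add _ Sp (fun w => rsum m (fun j => F j w)) (F m)); auto.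
Qed.

Lemma E_rsum_le m (F : nat -> Omega -> R) (c : nat -> R) :
  (forall j, H Sp (F j)) -> (forall j, Rbar_le (E Sp (F j)) (Finite (c j))) ->
  Rbar_le (E Sp (fun w => rsum m (fun j => F j w))) (Finite (rsum m c)).
Proof.
  intros HF Hc; induction m; simpl.
  - rewrite E_cst; simpl; lra.
  - pose proof (Hc m) as Hm.
    eapply Rbar_le_trans.
    + apply (E_subadd _ Sp (fun w => rsum m (fun j => F j w)) (F m)); auto using H_rsum.
      destruct (E Sp (fun w => rsum m (fun j => F j w))), (E Sp (F m)); simpl in *; tauto.
    + destruct (E Sp (fun w => rsum m (fun j => F j w))), (E Sp (F m)); simpl in *; tauto || lra.
Qed.

Lemma E_one_add_scal_le Y l :
  H Sp Y -> Rbar_le (E Sp Y) (Finite 0) -> 0 < l -> Rbar_le (E Sp (fun w => 1 + l * Y w)) (Finite 1).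
Proof.
  intros HY Hmean Hl.
  eapply Rbar_le_trans.
  - apply (E_subadd _ Sp (fun _ => 1) (fun w => l * Y w)); [apply H_cst | apply H_scal; auto |].
    rewrite E_cst; destruct (E Sp (fun w => l * Y w)); simpl; auto.
  - pose proof (E_scal_le l Y 0 HY Hl Hmean) as Hscal; rewrite E_cst.
    destruct (E Sp (fun w => l * Y w)); simpl in *; tauto || lra.
Qed.

Lemma real_Elow_le_E Y :
  H Sp Y -> (forall w, 0 <= Y w) -> Rbar_lt (E Sp Y) p_infty -> real (Elow Sp Y) <= real (E Sp Y).
Proof.
  intros HY Hpos Hfin; unfold Elow.
  assert (HnY : H Sp (fun w => - Y w)) by (apply (H_ext (fun w => -1 * Y w)); [intros; ring | now apply H_scal]).
  pose proof (E_ge_cst Y 0 HY Hpos) as HE0.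
  pose proof (E_le_cst _ 0 HnY (fun w => ltac:(pose proof (Hpos w); lra))) as HnE0.
  assert (Hplus : ex_Rbar_plus (E Sp Y) (E Sp (fun w => - Y w))).
  { destruct (E Sp Y), (E Sp (fun w => - Y w)); simpl in *; tauto. }
  pose proof (E_subadd _ Sp _ _ HY HnY Hplus) as Hsub.
  rewrite (E_ext _ (fun _ => 0)), E_cst in Hsub by (intros; ring).
  destruct (E Sp Y), (E Sp (fun w => - Y w)); simpl in *; try tauto; lra.
Qed.

Lemma Vcap_le_E (A : Omega -> Prop) xi :
  H Sp xi -> (forall w, A w -> 1 <= xi w) -> (forall w, 0 <= xi w) -> Rbar_le (Vcap Sp A) (E Sp xi).
Proof.
  intros Hxi HA Hpos; unfold Vcap, Rbar_glb.
  apply (proj1 (proj2_sig (Rbar_ex_glb _))); exists xi; auto.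
Qed.

Lemma Vcap_le_rsum_cover (A : Omega -> Prop) m (F : nat -> Omega -> R) (c : nat -> R) :
  (forall j, H Sp (F j)) -> (forall j w, 0 <= F j w) ->
  (forall j, Rbar_le (E Sp (F j)) (Finite (c j))) ->
  (forall w, A w -> exists j, (j < m)%nat /\ 1 <= F j w) ->
  Rbar_le (Vcap Sp A) (Finite (rsum m c)).
Proof.
  intros HF Hpos Hc Hcover.
  eapply Rbar_le_trans; [apply Vcap_le_E | apply E_rsum_le; auto].
  - apply H_rsum; auto.
  - intros w Hw; destruct (Hcover w Hw) as [j [Hj H1]].
    eapply Rle_trans; [exact H1 | apply (rsum_ge_term m (fun j => F j w)); auto].
  - intros w; apply rsum_nonneg; auto.
Qed.

End SublinearExpectation.

Section IndependentProduct.
Context {Omega : Type} (Sp : SLE Omega) (X : nat -> Omega -> R).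
Variables (h : R -> R) (M L : R).
Hypothesis HX : forall k, H Sp (X k).
Hypothesis Hind : indep_seq Sp X.
Hypothesis HM : 1 <= M.
Hypothesis HL : 0 <= L.
Hypothesis Hpos : forall y, 0 < h y.
Hypothesis Hbound : forall y, Rabs (h y) <= M.
Hypothesis Hlip : forall y z, Rabs (h y - h z) <= L * (1 + Rabs y + Rabs z) * Rabs (y - z).

Lemma H_h_rprod n : H Sp (fun w => rprod n (fun k => h (X k w))).
Proof.
  apply (H_comp _ Sp n X (fun z => rprod n (fun k => h (z k)))); auto.
  right; apply (clip_rprod h M L); auto.
Qed.

Lemma H_h k : H Sp (fun w => h (X k w)).
Proof. apply (H_comp1 Sp h L 1); auto; intros; rewrite !pow_1; auto. Qed.

Lemma E_h k : E Sp (fun w => h (X k w)) = Finite (real (E Sp (fun w => h (X k w)))).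
Proof.
  apply (E_finite_of_bounds Sp _ 0 M (H_h k)); intros w.
  pose proof (Hpos (X k w)); pose proof (Hbound (X k w)); rewrite Rabs_pos_eq in *; lra.
Qed.

(* Independence factorizes the expectation one factor at a time: conditionally on
   [X 0 .. X (i-1)], the last factor only contributes the constant [E[h (X i)]]. *)
Lemma E_h_rprod n :
  E Sp (fun w => rprod n (fun k => h (X k w))) = Finite (rprod n (fun k => real (E Sp (fun w => h (X k w))))).
Proof.
  induction n as [| i IH]; [simpl; apply E_cst |].
  set (e := real (E Sp (fun w => h (X i w)))).
  assert (He : 0 <= e) by (apply real_E_nonneg; [apply H_h | intros; left; apply Hpos]).
  assert (Hinner : forall x : nat -> R,
    E Sp (fun w => rprod (S i) (fun k => h (if Nat.ltb k i then x k else X i w))) =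
    Finite (rprod i (fun k => h (x k)) * e)).
  { intros x.
    rewrite (E_ext Sp _ (fun w => rprod i (fun k => h (x k)) * h (X i w))).
    - apply E_scal_finite; [apply H_h | apply rprod_pos; auto | apply E_h].
    - intros w; simpl; rewrite Nat.ltb_irrefl; f_equal.
      apply rprod_ext; intros k Hk; apply Nat.ltb_lt in Hk; now rewrite Hk. }
  assert (Houter : E Sp (fun w => e * rprod i (fun k => h (X k w))) =
                   Finite (e * rprod i (fun k => real (E Sp (fun w => h (X k w)))))).
  { destruct (Req_dec e 0) as [-> | Hne].
    - rewrite (E_ext Sp _ (fun _ => 0)), E_cst by (intros; ring); f_equal; ring.
    - apply E_scal_finite; [apply H_h_rprod | lra | exact IH]. }
  assert (Hfold : forall w, real (E Sp (fun w0 => rprod (S i)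
      (fun k => h (if Nat.ltb k i then X k w else X i w0)))) = e * rprod i (fun k => h (X k w))).
  { intros w; rewrite Hinner; simpl; ring. }
  pose proof (Hind i (fun z => rprod (S i) (fun k => h (z k))) (clip_rprod h M L HM HL Hbound Hlip (S i)))
    as Hfact; cbv beta zeta in Hfact.
  rewrite Hfact, (E_ext Sp _ _ Hfold), Houter.
  - simpl; f_equal; fold e; ring.
  - intros x; now rewrite Hinner.
  - eapply H_ext; [intros w; symmetry; apply Hfold | apply H_scal, H_h_rprod].
  - now rewrite (E_ext Sp _ _ Hfold), Houter.
Qed.

End IndependentProduct.

Lemma E_tilt_le {Omega} (Sp : SLE Omega) Y l a G :
  H Sp Y -> Rbar_le (E Sp Y) (Finite 0) -> 0 < l -> 0 < a ->
  E Sp (fun w => trunc_sq a (Y w)) = Finite G ->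
  Rbar_le (E Sp (fun w => tilt l (Y w))) (Finite (1 + 2 * l ^ 2 * (1 + l / a) * G)).
Proof.
  intros HY Hmean Hl Ha HG.
  set (c := 2 * l ^ 2 * (1 + l / a)).
  assert (Hc : 0 < c) by (unfold c; pose proof (pow_lt l 2 Hl);
                          assert (0 < l / a) by (apply Rdiv_lt_0_compat; lra); nra).
  assert (Htrunc : H Sp (fun w => trunc_sq a (Y w))) by (apply (H_comp1 Sp _ _ 2 _ (trunc_sq_lip a) HY)).
  assert (Hlin : H Sp (fun w => 1 + l * Y w)) by (apply (H_add _ Sp (fun _ => 1)); [apply H_cst | apply H_scal; auto]).
  assert (Hquad : H Sp (fun w => c * trunc_sq a (Y w))) by (apply H_scal; auto).
  eapply Rbar_le_trans.
  - apply (E_mono _ Sp _ (fun w => (1 + l * Y w) + c * trunc_sq a (Y w))).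
    + apply (H_comp1 Sp (tilt l) (exp (1 / 2) * (Rabs l + l ^ 2)) 1); auto.
      intros; rewrite !pow_1; apply tilt_lip.
    + apply (H_add _ Sp (fun w => 1 + l * Y w)); auto.
    + intros w; apply tilt_le_trunc_sq; auto.
  - pose proof (E_one_add_scal_le Sp Y l HY Hmean Hl) as Hone.
    eapply Rbar_le_trans; [apply (E_subadd _ Sp (fun w => 1 + l * Y w)); auto |];
      rewrite E_poshom, HG by auto; destruct (E Sp (fun w => 1 + l * Y w)); simpl in *; tauto || lra.
Qed.

Section TiltedProducts.
Context {Omega : Type} (Sp : SLE Omega) (X : nat -> Omega -> R) (n : nat).
Hypothesis HX : forall k, H Sp (X k).
Hypothesis Hind : indep_seq Sp X.
Hypothesis Hsq : forall k, Rbar_lt (E Sp (fun w => X k w ^ 2)) p_infty.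
Hypothesis Hmean : forall k, Rbar_le (E Sp (X k)) (Finite 0).

Lemma rsum_Elow_sq_le_E_sq :
  rsum n (fun k => real (Elow Sp (fun w => X k w ^ 2))) <= rsum n (fun k => real (E Sp (fun w => X k w ^ 2))).
Proof. apply rsum_le; intros k _; apply real_Elow_le_E; auto using H_sq; intros; apply pow2_ge_0. Qed.

Lemma E_trunc_sq a k : E Sp (fun w => trunc_sq a (X k w)) = Finite (real (E Sp (fun w => trunc_sq a (X k w)))).
Proof.
  assert (Htrunc : H Sp (fun w => trunc_sq a (X k w))) by apply (H_comp1 Sp _ _ 2 _ (trunc_sq_lip a) (HX k)).
  pose proof (E_ge_cst Sp _ 0 Htrunc (fun w => proj1 (trunc_sq_bounds a (X k w)))).
  pose proof (E_mono _ Sp _ _ Htrunc (H_sq Sp _ (HX k)) (fun w => proj2 (trunc_sq_bounds a (X k w)))).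
  pose proof (Hsq k).
  destruct (E Sp (fun w => trunc_sq a (X k w))), (E Sp (fun w => X k w ^ 2)); simpl in *; tauto.
Qed.

Lemma rsum_E_trunc_sq_nonneg a : 0 <= rsum n (fun k => real (E Sp (fun w => trunc_sq a (X k w)))).
Proof.
  apply rsum_nonneg; intros k; apply real_E_nonneg; [| intros; apply trunc_sq_bounds].
  apply (H_comp1 Sp _ _ 2 _ (trunc_sq_lip a) (HX k)).
Qed.

Lemma E_rprod_tilt_le l a : 0 < l -> 0 < a ->
  Rbar_le (E Sp (fun w => rprod n (fun k => tilt l (X k w))))
          (Finite (exp (2 * l ^ 2 * (1 + l / a) *
                        rsum n (fun k => real (E Sp (fun w => trunc_sq a (X k w))))))).
Proof.
  intros Hl Ha.
  assert (HM : 1 <= exp (1 / 2)) by (pose proof (exp_ineq1_le (1 / 2)); lra).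
  assert (HL : 0 <= exp (1 / 2) * (Rabs l + l ^ 2))
    by (pose proof (exp_pos (1 / 2)); pose proof (Rabs_pos l); pose proof (pow2_ge_0 l); nra).
  rewrite (E_h_rprod Sp X (tilt l) _ _ HX Hind HM HL (tilt_pos l) (tilt_abs_le l) (tilt_lip l)).
  rewrite <- rsum_scal, <- rprod_exp; simpl; apply rprod_le; intros k; split.
  - apply real_E_nonneg; [apply (H_h Sp X (tilt l) _ HX (tilt_lip l)) |].
    intros; left; apply tilt_pos.
  - pose proof (E_tilt_le Sp (X k) l a _ (HX k) (Hmean k) Hl Ha (E_trunc_sq a k)) as Hk.
    destruct (E Sp (fun w => tilt l (X k w))); simpl in *; try tauto.
    + eapply Rle_trans; [exact Hk | apply exp_ineq1_le].
    + left; apply exp_pos.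
Qed.


Lemma Vcap_le_tilt_grid (A : Omega -> Prop) x u0 a C N :
  2 <= x -> 0 < u0 -> 0 < a ->
  (forall u, u0 <= u ->
     2 * (x / u) ^ 2 * (1 + x / u / a) * rsum n (fun k => real (E Sp (fun w => trunc_sq a (X k w)))) <= C) ->
  (forall w, A w -> rsum n (fun k => X k w) >= x * sqrt (rsum n (fun k => X k w ^ 2)) /\
                    u0 <= sqrt (rsum n (fun k => X k w ^ 2)) <= u0 * (1 + INR N / x)) ->
  Rbar_le (Vcap Sp A) (Finite (INR (S N) * (exp (1 / 2 - x ^ 2 / 2) * exp C))).
Proof.
  intros Hx Hu0 Ha Hcoef Hcover.
  set (K := exp (1 / 2 - x ^ 2 / 2)).
  set (l j := x / (u0 * (1 + / x) ^ j)).
  assert (Hgrid : forall j, u0 <= u0 * (1 + / x) ^ j).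
  { intros j; pose proof (pow_R1_Rle (1 + / x) j ltac:(pose proof (Rinv_0_lt_compat x ltac:(lra)); lra)); nra. }
  assert (Hl : forall j, 0 < l j) by (intros j; apply Rdiv_lt_0_compat; [lra | pose proof (Hgrid j); lra]).
  assert (HM : 1 <= exp (1 / 2)) by (pose proof (exp_ineq1_le (1 / 2)); lra).
  assert (HL : forall j, 0 <= exp (1 / 2) * (Rabs (l j) + l j ^ 2))
    by (intros j; pose proof (exp_pos (1 / 2)); pose proof (Rabs_pos (l j)); pose proof (pow2_ge_0 (l j)); nra).
  rewrite <- rsum_const.
  apply (Vcap_le_rsum_cover Sp A (S N) (fun j w => K * rprod n (fun k => tilt (l j) (X k w)))).
  - intros j; apply H_scal, (H_h_rprod Sp X _ _ _ HX HM (HL j) (tilt_abs_le _) (tilt_lip _)).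
  - intros j w; apply Rmult_le_pos; [left; apply exp_pos | left; apply rprod_pos; intros; apply tilt_pos].
  - intros j; apply E_scal_le; [apply (H_h_rprod Sp X _ _ _ HX HM (HL j) (tilt_abs_le _) (tilt_lip _)) | apply exp_pos |].
    eapply Rbar_le_trans; [apply (E_rprod_tilt_le (l j) a (Hl j) Ha) |]; apply exp_le_mono, Hcoef, Hgrid.
  - intros w Hw; destruct (Hcover w Hw) as [HS HV].
    destruct (tilt_grid_cover x u0 _ _ N Hx Hu0 HV HS) as [j [Hj Hexp]]; exists j; split; auto.
    unfold tilt; rewrite rprod_exp, rsum_sub_scal.
    rewrite pow2_sqrt in Hexp by (apply rsum_nonneg; intros; apply pow2_ge_0); exact Hexp.
Qed.

End TiltedProducts.

Lemma Rpower_ratio_three_halves p q : 0 < p -> 0 < q -> Rpower (p / q) (3 / 2) = (sqrt p / sqrt q) ^ 3.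
Proof.
  intros Hp Hq.
  assert (Hpq : 0 < sqrt p / sqrt q) by (apply Rdiv_lt_0_compat; apply sqrt_lt_R0; lra).
  replace (p / q) with ((sqrt p / sqrt q) ^ 2)
    by (rewrite <- sqrt_div_alt, pow2_sqrt by (try apply Rlt_le, Rdiv_lt_0_compat; lra); reflexivity).
  rewrite <- !Rpower_pow, Rpower_mult by auto; f_equal; simpl; field.
Qed.

Lemma sqrt_in_grid_window x s b V2 N : 0 < x -> 0 < s <= b -> 6 * x * (b / s) <= INR N ->
  s ^ 2 / 4 <= V2 <= 9 * b ^ 2 -> s / 2 <= sqrt V2 <= s / 2 * (1 + INR N / x).
Proof.
  intros Hx [Hs Hsb] HN [Hlow Hhigh].
  set (V := sqrt V2).
  assert (HV : V ^ 2 = V2) by (apply pow2_sqrt; nra).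
  assert (0 <= V) by apply sqrt_pos.
  assert (HNx : s / 2 * (6 * x * (b / s)) / x <= s / 2 * (INR N / x)).
  { unfold Rdiv; rewrite <- !Rmult_assoc; apply Rmult_le_compat_r;
      [left; apply Rinv_0_lt_compat; lra |].
    rewrite !Rmult_assoc; apply Rmult_le_compat_l; [lra |]; unfold Rdiv in HN; lra. }
  replace (s / 2 * (6 * x * (b / s)) / x) with (3 * b) in HNx by (field; lra).
  split; nra.
Qed.

Theorem proposition6p3 :
  exists C : R,
  forall (Omega : Type) (S : SLE Omega) (X : nat -> Omega -> R) (n : nat) (x : R),
    (forall k, H S (X k)) ->
    indep_seq S X ->
    (forall k, Rbar_lt (E S (fun w => X k w ^ 2)) p_infty) ->
    (forall k, Rbar_le (E S (X k)) (Finite 0)) ->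
    let Sn := fun w => rsum n (fun k => X k w) in
    let Vn2 := fun w => rsum n (fun k => X k w ^ 2) in
    let Bup2 := rsum n (fun k => real (E S (fun w => X k w ^ 2))) in
    let Blow2 := rsum n (fun k => real (Elow S (fun w => X k w ^ 2))) in
    0 < Blow2 ->
    let qn := Bup2 / Blow2 in
    let Delta := / Bup2 * rsum n (fun k =>
          real (E S (fun w => X k w ^ 2 * Rmin 1 (Rabs (x * X k w / sqrt Bup2))))) in
    let delta := / 4 * Blow2 / Bup2 in
    2 <= x ->
    Rbar_le
      (Vcap S (fun w => Sn w >= x * sqrt (Vn2 w) /\
                        delta * Bup2 <= Vn2 w <= 9 * Bup2))
      (Finite (exp (- x ^ 2 / 2 + C * Rpower qn (3 / 2) * (ln x + x ^ 2 * Delta)))).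
Proof.
  exists 100.
  intros Omega S X n x HX Hind Hsq Hmean Sn Vn2 Bup2 Blow2 Hlow qn Delta delta Hx.
  assert (Hlu : Blow2 <= Bup2) by exact (rsum_Elow_sq_le_E_sq S X n HX Hsq).
  assert (Hq : Rpower qn (3 / 2) = (sqrt Bup2 / sqrt Blow2) ^ 3) by (apply Rpower_ratio_three_halves; lra).
  set (b := sqrt Bup2) in *; set (s := sqrt Blow2) in *; set (t := b / s) in *.
  assert (Hb2 : b ^ 2 = Bup2) by (apply pow2_sqrt; lra).
  assert (Hsb : 0 < s <= b) by (split; [apply sqrt_lt_R0 | apply sqrt_le_1]; lra).
  assert (Ht : 1 <= t) by (unfold t; apply (Rmult_le_reg_r s); [lra | field_simplify; lra]).
  assert (HG : rsum n (fun k => real (E S (fun w => trunc_sq (x / b) (X k w)))) = b ^ 2 * Delta).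
  { unfold Delta; rewrite Hb2, <- Rmult_assoc, Rinv_r, Rmult_1_l by lra.
    apply rsum_ext; intros k _; f_equal; apply E_ext; intros w.
    unfold trunc_sq; do 3 f_equal; field; lra. }
  assert (HDelta : 0 <= Delta).
  { apply (Rmult_le_reg_l (b ^ 2)); [apply pow_lt; lra |].
    rewrite Rmult_0_r, <- HG; apply (rsum_E_trunc_sq_nonneg S X n HX). }
  destruct (nat_ceil_exists (6 * x * t)) as [N HN]; [nra |].
  eapply Rbar_le_trans.
  - apply (Vcap_le_tilt_grid S X n HX Hind Hsq Hmean _ x (s / 2) (x / b) (24 * t ^ 3 * x ^ 2 * Delta) N);
      try lra; [apply Rdiv_lt_0_compat; lra | |].
    + intros u Hu; rewrite HG, <- Rmult_assoc; apply Rmult_le_compat_r; [exact HDelta | apply tilt_coeff_le; lra].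
    + intros w [HS HV]; split; [exact HS |]; apply (sqrt_in_grid_window x s b); [lra | lra | apply HN |].
      replace (s ^ 2 / 4) with (delta * Bup2) by (unfold delta, s; rewrite pow2_sqrt by lra; field; lra).
      rewrite Hb2; exact HV.
  - simpl; rewrite Hq; apply grid_sum_le; lra.
Qed.
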